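(* Let $\mathcal{L}$ be a distributive abstract logic, $T\in Th_{\mathcal{L}}$ a theory and $a\in Expr_{\mathcal{L}}$ with $a\notin T$. Then there is a prime theory $P\in PTh_{\mathcal{L}}$ with $T\subseteq P$ and $a\notin P$.
   Context: An abstract logic is a triple $\mathcal{L}=(Expr_{\mathcal{L}},Th_{\mathcal{L}},\mathcal{C}_{\mathcal{L}})$ where $Expr_{\mathcal{L}}$ is a set, $Th_{\mathcal{L}}$ a non-empty set of subsets of $Expr_{\mathcal{L}}$ (theories) with $\bigcap\mathcal{T}\in Th_{\mathcal{L}}$ for every non-empty $\mathcal{T}\subseteq Th_{\mathcal{L}}$, and $\mathcal{C}_{\mathcal{L}}$ a set of operations on $Expr_{\mathcal{L}}$. $\mathcal{L}$ is closed under union of chains if the union of every non-empty chain of theories is a theory. A theory $T$ is prime if $T=\bigcap\mathcal{T}$ for a non-empty finite $\mathcal{T}\subseteq Th_{\mathcal{L}}$ implies $T\in\mathcal{T}$; totally prime if this holds for every non-empty $\mathcal{T}$ of any cardinality. $PTh_{\mathcal{L}}$, $TPTh_{\mathcal{L}}$ denote the sets of prime and totally prime theories. A distributive abstract logic is an abstract logic closed under union of chains with binary connectives $\vee,\wedge\in\mathcal{C}_{\mathcal{L}}$ such that for all $a,b$ and all $T\in TPTh_{\mathcal{L}}$: $a\vee b\in T$ iff $a\in T$ or $b\in T$; $a\wedge b\in T$ iff $a\in T$ and $b\in T$. *)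

From mathcomp Require Import all_boot.
From mathcomp Require Import all_classical.
Set Implicit Arguments. Unset Strict Implicit. Unset Printing Implicit Defensive.
Local Open Scope classical_set_scope.

Definition operation (E : Type) := {n : nat & ('I_n -> E) -> E}.

Definition binop (E : Type) (f : E -> E -> E) : operation E :=
  existT _ 2 (fun v : 'I_2 -> E => f (v ord0) (v ord_max)).

Definition abstract_logic (E : Type) (Th : set (set E)) (C : set (operation E)) : Prop :=
  Th !=set0 /\
  forall Ts : set (set E), Ts `<=` Th -> Ts !=set0 -> Th (\bigcap_(X in Ts) X).

Definition closed_union_chains (E : Type) (Th : set (set E)) : Prop :=
  forall Cs : set (set E), Cs `<=` Th -> Cs !=set0 ->
    (forall X Y, Cs X -> Cs Y -> X `<=` Y \/ Y `<=` X) ->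
    Th (\bigcup_(X in Cs) X).

Definition prime_theory (E : Type) (Th : set (set E)) (T : set E) : Prop :=
  Th T /\
  forall Ts : set (set E), Ts `<=` Th -> Ts !=set0 -> finite_set Ts ->
    T = \bigcap_(X in Ts) X -> Ts T.

Definition totally_prime_theory (E : Type) (Th : set (set E)) (T : set E) : Prop :=
  Th T /\
  forall Ts : set (set E), Ts `<=` Th -> Ts !=set0 ->
    T = \bigcap_(X in Ts) X -> Ts T.

Definition distributive_abstract_logic (E : Type) (Th : set (set E))
    (C : set (operation E)) (or_ and_ : E -> E -> E) : Prop :=
  [/\ abstract_logic Th C, closed_union_chains Th,
      C (binop or_), C (binop and_) &
      forall T, totally_prime_theory Th T ->
        forall a b, (T (or_ a b) <-> T a \/ T b) /\ (T (and_ a b) <-> T a /\ T b)].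

From mathcomp Require Import all_boot all_classical.
Set Implicit Arguments. Unset Strict Implicit. Unset Printing Implicit Defensive.
Local Open Scope classical_set_scope.

(* By Zorn's lemma, using closure under unions of chains, T extends to a
   theory A that is maximal among the theories omitting a.  Such an A is
   even totally prime: if A is the meet of a family of theories, each member
   contains A, and a member that differs from A properly extends it, so by
   maximality it contains a; if every member did, so would A. *)

Lemma ex_maximal_superset (T : Type) (P : set (set T)) (X0 : set T) :
  P X0 ->
  (forall F : set (set T), F `<=` P -> F !=set0 -> total_on F subset ->
    P (\bigcup_(X in F) X)) ->
  exists A, [/\ P A, X0 `<=` A & forall B, A `<` B -> ~ P B].
Proof.
move=> PX0 chainP.
(* [set0] is added so that the empty chain has an upper bound. *)
pose Q X := (P X /\ X0 `<=` X) \/ X = set0.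
have [A [QA Amax]] : exists A, Q A /\ forall B, A `<` B -> ~ Q B.
  apply: Zorn_bigcup => F FQ Ftot.
  have [[X FX [PX X0X]]|noPX] := pselect (exists2 X, F X & P X /\ X0 `<=` X).
  - have eqU : \bigcup_(Y in F) Y = \bigcup_(Y in F `&` (P `&` [set Y | X0 `<=` Y])) Y.
      apply/seteqP; split => x [Y FY Yx]; last by exists Y => //; case: FY.
      by exists Y => //; split => //; case: (FQ Y FY) => // Y0; rewrite Y0 in Yx.
    left; rewrite eqU; split.
    + apply: chainP; first by move=> Y [_ []].
      * by exists X.
      * by move=> Y Z [FY _] [FZ _]; apply: Ftot.
    + by move=> x X0x; exists X => //; apply: X0X.
  - right; apply/seteqP; split => x // [Y FY Yx].
    case: (FQ Y FY) => [PY|Y0]; last by rewrite Y0 in Yx.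
    by case: noPX; exists Y.
have PA : P A /\ X0 `<=` A.
  case: QA => // A0.
  have [[x X0x]|X0_0] := pselect (exists x, X0 x).
    exfalso; apply: (Amax X0); [|by left; split].
    by rewrite A0; split => // /(_ x X0x).
  have -> : A = X0 by rewrite A0; apply/seteqP; split => // x X0x; case: X0_0; exists x.
  by split.
case: PA => PA X0A; exists A; split => // B AB PB.
by apply: (Amax B AB); left; split => //; apply: subset_trans X0A (properW AB).
Qed.

Lemma ex_maximal_theory_omitting (E : Type) (Th : set (set E)) (T : set E) (a : E) :
  closed_union_chains Th -> Th T -> ~ T a ->
  exists A, [/\ Th A, T `<=` A, ~ A a & forall B, Th B -> A `<` B -> B a].
Proof.
move=> chainTh ThT Ta.
have [A [[ThA nAa] TA Amax]] :
    exists A, [/\ (Th `&` [set X | ~ X a]) A, T `<=` A &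
               forall B, A `<` B -> ~ (Th `&` [set X | ~ X a]) B].
  apply: ex_maximal_superset => // F FP [X FX] Ftot; split.
  - by apply: chainTh => //; [move=> Y /FP [] | exists X].
  - by case=> Y /FP [_ nYa].
exists A; split => // B ThB AB.
by apply: contrapT => nBa; apply: (Amax B AB).
Qed.

Lemma maximal_omitting_totally_prime (E : Type) (Th : set (set E)) (A : set E) (a : E) :
  Th A -> ~ A a -> (forall B, Th B -> A `<` B -> B a) ->
  totally_prime_theory Th A.
Proof.
move=> ThA nAa Amax; split => // Ts TsTh _ eqA.
have [[X TsX nXa]|allXa] := pselect (exists2 X, Ts X & ~ X a).
  have AX : A `<=` X by rewrite eqA => x; apply.
  have [-> //|neqAX] := pselect (A = X).
  by case: nXa; apply: Amax; [apply: TsTh | split => // XA; apply/neqAX/seteqP].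
case: nAa; rewrite eqA => X TsX.
by apply: contrapT => nXa; apply: allXa; exists X.
Qed.

Lemma totally_prime_theory_prime (E : Type) (Th : set (set E)) (P : set E) :
  totally_prime_theory Th P -> prime_theory Th P.
Proof. by case=> ThP Pprime; split => // Ts TsTh Ts0 _; apply: Pprime. Qed.

Theorem corollary3p3 (E : Type) (Th : set (set E)) (C : set (operation E))
    (or_ and_ : E -> E -> E) :
  distributive_abstract_logic Th C or_ and_ ->
  forall (T : set E) (a : E), Th T -> ~ T a ->
  exists P : set E, prime_theory Th P /\ T `<=` P /\ ~ P a.
Proof.
move=> [_ chainTh _ _ _] T a ThT Ta.
have [A [ThA TA nAa Amax]] := ex_maximal_theory_omitting chainTh ThT Ta.
exists A; split => //.
exact/totally_prime_theory_prime/(maximal_omitting_totally_prime ThA nAa Amax).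
Qed.
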